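(* For $1\le i\le n$ define the polynomial $$F(n,i)(p,q)=\sum_{\pi\in S_n,\ \pi_n=i}p^{\mathrm{inv}(\pi)}q^{\mathrm{maj}(\pi)} .$$ Then $F(1,1)=1$, and for $n\ge 2$: $$F(n,i)=p^{n-i}\sum_{j=1}^{i-1}F(n-1,j)+p^{n-i}q^{n-1}\sum_{j=i}^{n-1}F(n-1,j)\qquad(1\le i\le n),$$ and consequently $$F(n,i)=p\,F(n,i+1)+p^{n-i}(q^{n-1}-1)F(n-1,i)\quad (1\le i<n),\qquad F(n,n)=\sum_{j=1}^{n-1}F(n-1,j).$$ Moreover $\sum_{\pi\in S_n}p^{\mathrm{inv}(\pi)}q^{\mathrm{maj}(\pi)}=F(n+1,n+1)(p,q)$.
   Context: For a permutation $\pi=\pi_1\cdots\pi_n$ of $\{1,\dots,n\}$: $\mathrm{inv}(\pi)$ is the number of pairs $1\le i<j\le n$ with $\pi_i>\pi_j$, and $\mathrm{maj}(\pi)$ is the sum of all positions $i\in\{1,\dots,n-1\}$ with $\pi_i>\pi_{i+1}$. *)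

From HB Require Import structures.
From mathcomp Require Import all_boot all_order all_algebra.
From mathcomp Require Import fingroup perm.
Set Implicit Arguments. Unset Strict Implicit. Unset Printing Implicit Defensive.
Import GRing.Theory.

(* One-line notation pi_1 ... pi_n of s : 'S_n, with 0-based values:
   (word s)`_k = pi_{k+1} - 1. *)
Definition word n (s : 'S_n) : seq nat := [seq val (s k) | k <- enum 'I_n].

Definition ninv n (s : 'S_n) : nat :=
  #|[set ab : 'I_n * 'I_n | (ab.1 < ab.2)%N && (s ab.2 < s ab.1)%N]|.

Definition maj n (s : 'S_n) : nat :=
  \sum_(k < n.-1 | nth 0 (word s) k.+1 < nth 0 (word s) k) k.+1.

(* F(n,i)(p,q) = sum over pi in S_n with pi_n = i of p^inv q^maj,
   evaluated at arbitrary p q in a commutative ring (this covers the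
   polynomial identity by taking R = Z[p,q]). *)
Local Open Scope ring_scope.
Definition F (R : comNzRingType) (n i : nat) (p q : R) : R :=
  \sum_(s : 'S_n | nth 0%N (word s) n.-1 == i.-1) p ^+ ninv s * q ^+ maj s.

From HB Require Import structures.
From mathcomp Require Import all_boot all_order all_algebra.
From mathcomp Require Import fingroup perm.
From mathcomp Require Import ring.
Import GRing.Theory.
Set Implicit Arguments. Unset Strict Implicit.

(* Write s in S_(n+1) as t in S_n with the value j inserted in last position,
   i.e. s = lift_perm ord_max j t.  The last letter forms an inversion with each
   of the n - j larger letters in front of it, and position n is a new descent
   exactly when the last letter t_n of t is at least j; all other inversions and
   descents are those of t.  Hence
     F(n+1, j+1) = p^(n-j) * sum_k q^([j <= k] n) F(n, k+1),
   which, split at k = j, is the first recurrence; the other identities follow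
   by comparing consecutive values of j and taking j = n. *)

Lemma ltn_bump2 h i j : (bump h i < bump h j) = (i < j).
Proof. by rewrite !ltnNge leq_bump2. Qed.

Lemma ltn_bump h i : (h < bump h i) = (h <= i).
Proof.
rewrite /bump; case: (leqP h i) => [hi | ih]; first by rewrite add1n ltnS hi.
by rewrite ltnNge ltnW.
Qed.

Lemma widen_lift_max n (i : 'I_n) : widen_ord (leqnSn n) i = lift ord_max i.
Proof. by apply: val_inj; rewrite /= /bump leqNgt ltn_ord. Qed.

Lemma lift0_widen_max n (k : 'I_n) :
  lift ord0 (widen_ord (leqnSn n) k) = lift ord_max (lift ord0 k).
Proof. by apply: val_inj; rewrite /= /bump /= leqNgt ltnS ltn_ord. Qed.

Lemma lift_perm_max_bij n :
  bijective (fun jt : 'I_n.+1 * 'S_n => lift_perm ord_max jt.1 jt.2).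
Proof.
apply: inj_card_bij; last by rewrite card_prod card_ord !card_Sn factS.
move=> [j1 t1] [j2 t2] /= eq_lift.
have eq_j : j1 = j2 by rewrite -(lift_perm_id ord_max j1 t1) eq_lift lift_perm_id.
rewrite -{}eq_j in eq_lift *; congr pair; apply/permP => k.
by apply: (@lift_inj _ j1); rewrite -!(lift_perm_lift ord_max) eq_lift.
Qed.

Lemma sum_perm_lift_max (V : nmodType) n (f : 'S_n.+1 -> V) :
  (\sum_(s : 'S_n.+1) f s
     = \sum_(j < n.+1) \sum_(t : 'S_n) f (lift_perm ord_max j t))%R.
Proof. by rewrite pair_big (reindex _ (onW_bij _ (lift_perm_max_bij n))). Qed.

Lemma sum_perm_last (V : nmodType) n (j : 'I_n.+1) (f : 'S_n.+1 -> V) :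
  (\sum_(s : 'S_n.+1 | s ord_max == j) f s
     = \sum_(t : 'S_n) f (lift_perm ord_max j t))%R.
Proof.
rewrite big_mkcond sum_perm_lift_max (bigD1 j) //=.
rewrite [X in (_ + X)%R]big1 ?addr0 => [|k /negPf nkj].
  by apply: eq_bigr => t _; rewrite lift_perm_id eqxx.
by rewrite big1 // => t _; rewrite lift_perm_id nkj.
Qed.

Lemma sum_ord_geq n j : \sum_(k < n) (j <= k) = n - j.
Proof.
rewrite (eq_bigr (fun k : 'I_n => if true && (j <= k) then 1 else 0)) //.
rewrite -big_mkcond -(big_geq_mkord j n xpredT (fun=> 1)).
by rewrite sum_nat_const_nat muln1.
Qed.

Lemma ninvE n (s : 'S_n) :
  ninv s = \sum_(a : 'I_n) \sum_(b : 'I_n) ((a < b) && (s b < s a)).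
Proof.
rewrite /ninv -sum1_card pair_big /= big_mkcond /=.
by apply: eq_bigr => ab _; rewrite inE; case: ifP.
Qed.

Lemma ninv_lift_perm_max n (j : 'I_n.+1) (t : 'S_n) :
  ninv (lift_perm ord_max j t) = ninv t + (n - j).
Proof.
rewrite !ninvE big_ord_recr /= big_ord_recr /= ltnn andFb addn0.
rewrite [X in _ + X = _]big1 ?addn0 => [|b _]; last by rewrite ltnNge ltnW.
rewrite -sum_ord_geq [X in _ = _ + X](reindex_inj (@perm_inj _ t)) -big_split /=.
apply: eq_bigr => a _; rewrite big_ord_recr /= !widen_lift_max.
rewrite !lift_perm_lift lift_perm_id ltn_ord /=; congr (_ + _).
  by apply: eq_bigr => b _; rewrite widen_lift_max lift_perm_lift ltn_bump2.
by rewrite ltn_bump.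
Qed.

Lemma nth_word n (s : 'S_n) (i : 'I_n) : nth 0 (word s) i = s i.
Proof. by rewrite /word (nth_map i) ?size_enum_ord ?nth_ord_enum. Qed.

Lemma majE n (s : 'S_n.+1) :
  maj s = \sum_(k < n | s (lift ord0 k) < s (widen_ord (leqnSn n) k)) k.+1.
Proof.
apply: eq_bigl => k; rewrite -(lift0 k) (nth_word s (lift ord0 k)).
by rewrite (nth_word s (widen_ord (leqnSn n) k)).
Qed.

Lemma maj_lift_perm_max n (j : 'I_n.+2) (t : 'S_n.+1) :
  maj (lift_perm ord_max j t) = maj t + (j <= t ord_max) * n.+1.
Proof.
rewrite !majE big_mkcond big_ord_recr /= -big_mkcond; congr (_ + _).
  apply: eq_bigl => k; rewrite lift0_widen_max !widen_lift_max.
  by rewrite !lift_perm_lift ltn_bump2.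
have -> : lift ord0 ord_max = ord_max :> 'I_n.+2 by apply: val_inj.
rewrite widen_lift_max lift_perm_id lift_perm_lift /=.
by rewrite ltn_bump; case: (j <= t ord_max); rewrite ?mul1n ?mul0n.
Qed.

Lemma maj_lift_perm_max_max n (t : 'S_n) :
  maj (lift_perm ord_max ord_max t) = maj t.
Proof.
case: n t => [|n] t; first by rewrite /maj !big_ord0.
by rewrite maj_lift_perm_max leqNgt ltn_ord mul0n addn0.
Qed.

Local Open Scope ring_scope.

Section InvMajPolynomials.
Variables (R : comNzRingType) (p q : R).

Lemma F_lastE n (k : 'I_n.+1) :
  F n.+1 k.+1 p q = \sum_(s : 'S_n.+1 | s ord_max == k) p ^+ ninv s * q ^+ maj s.
Proof. by apply: eq_bigl => s; rewrite /= (nth_word s ord_max). Qed.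

Lemma F_expand n (j : 'I_n.+2) :
  F n.+2 j.+1 p q =
    \sum_(k < n.+1) p ^+ (n.+1 - j) * q ^+ ((j <= k)%N * n.+1) * F n.+1 k.+1 p q.
Proof.
rewrite F_lastE sum_perm_last.
rewrite (partition_big (fun t : 'S_n.+1 => t ord_max) predT) //=.
apply: eq_bigr => k _; rewrite F_lastE mulr_sumr; apply: eq_bigr => t /eqP <-.
by rewrite ninv_lift_perm_max maj_lift_perm_max !exprD; ring.
Qed.

Lemma sum_ninv_maj n :
  \sum_(s : 'S_n) p ^+ ninv s * q ^+ maj s = F n.+1 n.+1 p q.
Proof.
rewrite (F_lastE ord_max) sum_perm_last; apply: eq_bigr => t _.
by rewrite ninv_lift_perm_max maj_lift_perm_max_max subnn addn0.
Qed.

Lemma F11 : F 1 1 p q = 1.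
Proof.
rewrite -sum_ninv_maj (eq_bigr (fun=> 1)) => [|s _]; last first.
  by rewrite ninvE /maj !big_ord0 mulr1.
by rewrite sumr_const card_Sn.
Qed.

Lemma F_rec n i : (2 <= n)%N -> (1 <= i <= n)%N ->
  F n i p q =
    p ^+ (n - i) * (\sum_(1 <= j < i) F n.-1 j p q)
    + p ^+ (n - i) * q ^+ n.-1 * (\sum_(i <= j < n) F n.-1 j p q).
Proof.
case: n => [|[|n]] // _; case: i => [|i] //= lt_in.
rewrite (F_expand (Ordinal lt_in)) /= subSS !big_add1 /=.
rewrite -(big_mkord xpredT
  (fun k => p ^+ (n.+1 - i) * q ^+ ((i <= k)%N * n.+1) * F n.+1 k.+1 p q)).
rewrite (@big_cat_nat _ _ _ i) //= !mulr_sumr.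
congr (_ + _); apply: eq_big_nat => k /andP[le_ik lt_kn].
  by rewrite leqNgt lt_kn mul0n mulr1.
by rewrite le_ik mul1n.
Qed.

Lemma F_recS n i : (2 <= n)%N -> (1 <= i < n)%N ->
  F n i p q = p * F n i.+1 p q + p ^+ (n - i) * (q ^+ n.-1 - 1) * F n.-1 i p q.
Proof.
move=> le2n /andP[le1i lt_in].
rewrite (@F_rec n i) ?le1i ?(ltnW lt_in) // (@F_rec n i.+1) ?lt_in //.
rewrite (big_nat_recr i) // (big_ltn lt_in) -(subnSK lt_in) exprS /=.
by set A := \sum_(1 <= j < i) _; set B := \sum_(i.+1 <= j < n) _; ring.
Qed.

Lemma F_diag n : (2 <= n)%N -> F n n p q = \sum_(1 <= j < n) F n.-1 j p q.
Proof.
move=> le2n; rewrite (@F_rec n n) ?leqnn ?(ltnW le2n) //.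
rewrite subnn (big_geq (leqnn n)).
by rewrite expr0 mulr0 addr0 mul1r.
Qed.

End InvMajPolynomials.

Theorem mainTheorem5 (R : comNzRingType) (p q : R) :
  [/\ F 1 1 p q = 1,
      (forall n i : nat, (2 <= n)%N -> (1 <= i <= n)%N ->
         F n i p q =
           p ^+ (n - i) * (\sum_(1 <= j < i) F n.-1 j p q)
           + p ^+ (n - i) * q ^+ n.-1 * (\sum_(i <= j < n) F n.-1 j p q)),
      (forall n i : nat, (2 <= n)%N -> (1 <= i < n)%N ->
         F n i p q = p * F n i.+1 p q + p ^+ (n - i) * (q ^+ n.-1 - 1) * F n.-1 i p q),
      (forall n : nat, (2 <= n)%N -> F n n p q = \sum_(1 <= j < n) F n.-1 j p q)
    & (forall n : nat,
         \sum_(s : 'S_n) p ^+ ninv s * q ^+ maj s = F n.+1 n.+1 p q)].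
Proof.
split; [exact: F11 | exact: F_rec | exact: F_recS | exact: F_diag | exact: sum_ninv_maj].
Qed.
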